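(* Let $\Sigma_1$ and $\Sigma_2$ be systems with states $x^i\in\mathbb{R}^{n_i}$, inputs $u^i$ and outputs $y^i$ ($i=1,2$), where $\dim u^1=\dim y^2$ and $\dim u^2=\dim y^1$. Suppose $\Sigma_i$ is $p_i$-dissipative (respectively strictly $p_i$-dissipative), $i=1,2$, both with the same rate $\gamma\ge0$, with incremental supplies $$w^i(\Delta u^i,\Delta y^i)=\begin{bmatrix}\Delta y^i\\ \Delta u^i\end{bmatrix}^{\top}\begin{bmatrix}Q_i&L_i\\ L_i^{\top}&R_i\end{bmatrix}\begin{bmatrix}\Delta y^i\\ \Delta u^i\end{bmatrix},$$ with $Q_i,R_i$ symmetric. Consider the negative feedback interconnection $u^1=-y^2+v^1$, $u^2=y^1+v^2$, with input $v=[v^1;v^2]$, output $y=[y^1;y^2]$ and state $(x^1,x^2)$. Then the interconnection is $(p_1+p_2)$-dissipative (respectively strictly $(p_1+p_2)$-dissipative) with rate $\gamma$ and incremental supply $$\begin{bmatrix}\Delta y\\ \Delta v\end{bmatrix}^{\top}\begin{bmatrix}Q_1+R_2&-L_1+L_2^{\top}&L_1&R_2\\ -L_1^{\top}+L_2&Q_2+R_1&-R_1&L_2\\ L_1^{\top}&-R_1^{\top}&R_1&0\\ R_2&L_2^{\top}&0&R_2\end{bmatrix}\begin{bmatrix}\Delta y\\ \Delta v\end{bmatrix}.$$ In addition, if $$\begin{bmatrix}Q_1+R_2&-L_1+L_2^{\top}\\ -L_1^{\top}+L_2&Q_2+R_1\end{bmatrix}\le 0,$$ then the interconnection is $(p_1+p_2)$-dominant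 (respectively strictly $(p_1+p_2)$-dominant) with rate $\gamma$, i.e. the dominance inequality holds for every pair of its trajectories driven by the same input $v$.
   Context: A trajectory of a system with state $x\in\mathbb{R}^n$, input $u$ and output $y$ has absolutely continuous state and satisfies the system's equations for almost all $t\ge0$. For two trajectories write $\Delta x=x_1-x_2$, $\Delta\dot x=\dot x_1-\dot x_2$, $\Delta u=u_1-u_2$, $\Delta y=y_1-y_2$. A symmetric matrix $P$ has inertia $\{p,0,n-p\}$ if it has $p$ negative and $n-p$ positive eigenvalues. A system is $p$-dissipative with rate $\gamma\ge0$ and incremental supply $w$ (a quadratic form in $(\Delta y,\Delta u)$) if there exist a symmetric $P$ with inertia $\{p,0,n-p\}$ and $\varepsilon\ge0$ such that for every pair of trajectories, for almost all $t$, $$\begin{bmatrix}\Delta\dot x\\ \Delta x\end{bmatrix}^{\top}\begin{bmatrix}0&P\\P&2\gamma P+\varepsilon I\end{bmatrix}\begin{bmatrix}\Delta\dot x\\ \Delta x\end{bmatrix}\le w(\Delta y,\Delta u);$$ strictly $p$-dissipative if this holds with some $\varepsilon>0$. A system is $p$-dominant (strictly $p$-dominant) with rate $\gamma$ if the same inequality holds with right-hand side $0$ for some such $P$ and $\varepsilon\ge0$ ($\varepsilon>0$). *)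

From HB Require Import structures.
From mathcomp Require Import all_boot all_order all_algebra.
From mathcomp Require Import all_classical all_reals all_analysis.
Set Implicit Arguments. Unset Strict Implicit. Unset Printing Implicit Defensive.
Import Order.TTheory GRing.Theory Num.Theory.
Local Open Scope ring_scope.

Section Defs.
Variable R : realType.

Definition qf (k : nat) (M : 'M[R]_k) (z : 'cV[R]_k) : R := ((z^T *m M *m z) 0 0).

Definition nsd (k : nat) (M : 'M[R]_k) : Prop := forall z : 'cV[R]_k, qf M z <= 0.

(* A real symmetric matrix P has inertia {p,0,n-p}: its eigenvalues (roots of the
   characteristic polynomial, counted with multiplicity) consist of p negative and
   n-p positive ones. *)
Definition has_inertia (n : nat) (P : 'M[R]_n) (p : nat) : Prop :=
  P^T = P /\
  exists lam : 'I_n -> R,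
    char_poly P = \prod_(i < n) ('X - (lam i)%:P) /\
    #|[set i | lam i < 0]| = p /\ #|[set i | 0 < lam i]| = (n - p)%N.

(* A system with state in R^n, input in R^m, output in R^k, given by its set of
   trajectories t |-> (x t, xdot t, u t, y t), where xdot is the (a.e.) derivative
   of the state x. *)
Definition sys (n m k : nat) :=
  (R -> 'cV[R]_n) -> (R -> 'cV[R]_n) -> (R -> 'cV[R]_m) -> (R -> 'cV[R]_k) -> Prop.

Definition diss_lhs (n : nat) (P : 'M[R]_n) (gamma eps : R) (dxd dx : 'cV[R]_n) : R :=
  qf (block_mx 0 P P (2 * gamma *: P + eps *: 1%:M)) (col_mx dxd dx).

Definition eps_ok (strict : bool) (eps : R) : bool :=
  if strict then 0 < eps else 0 <= eps.

Definition p_dissipative (strict : bool) (n m k : nat) (S : sys n m k) (p : nat)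
    (gamma : R) (W : 'M[R]_(k + m)) : Prop :=
  exists P : 'M[R]_n, has_inertia P p /\
  exists eps : R, eps_ok strict eps /\
  forall x1 xd1 u1 y1 x2 xd2 u2 y2,
    S x1 xd1 u1 y1 -> S x2 xd2 u2 y2 ->
    {ae (@lebesgue_measure R), forall t : R, 0 <= t ->
       diss_lhs P gamma eps (xd1 t - xd2 t) (x1 t - x2 t)
       <= qf W (col_mx (y1 t - y2 t) (u1 t - u2 t))}.

Definition p_dominant (strict : bool) (n m k : nat) (S : sys n m k) (p : nat)
    (gamma : R) : Prop :=
  exists P : 'M[R]_n, has_inertia P p /\
  exists eps : R, eps_ok strict eps /\
  forall x1 xd1 u1 y1 x2 xd2 u2 y2,
    S x1 xd1 u1 y1 -> S x2 xd2 u2 y2 -> u1 = u2 ->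
    {ae (@lebesgue_measure R), forall t : R, 0 <= t ->
       diss_lhs P gamma eps (xd1 t - xd2 t) (x1 t - x2 t) <= 0}.

Definition feedback (n1 n2 m1 k1 : nat) (S1 : sys n1 m1 k1) (S2 : sys n2 k1 m1) :
    sys (n1 + n2) (m1 + k1) (k1 + m1) :=
  fun x xd v y =>
    exists x1 xd1 u1 y1 x2 xd2 u2 y2,
      S1 x1 xd1 u1 y1 /\ S2 x2 xd2 u2 y2 /\
      (forall t, x t = col_mx (x1 t) (x2 t)) /\
      (forall t, xd t = col_mx (xd1 t) (xd2 t)) /\
      (forall t, y t = col_mx (y1 t) (y2 t)) /\
      (forall t, u1 t = - y2 t + usubmx (v t)) /\
      (forall t, u2 t = y1 t + dsubmx (v t)).

End Defs.

From HB Require Import structures.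
From mathcomp Require Import all_boot all_order all_algebra.
From mathcomp Require Import all_classical all_reals all_analysis.
From mathcomp Require Import zify ring.
Import Order.TTheory GRing.Theory Num.Theory.
Set Implicit Arguments. Unset Strict Implicit. Unset Printing Implicit Defensive.
Local Open Scope ring_scope.

(* Both the storage term [diss_lhs] and the supply split along the two
   subsystems once the interconnection matrix is taken block diagonal,
   [P = diag(P1, P2)], whose inertia is the sum of the inertias.  The
   substitution [u1 = -y2 + v1], [u2 = y1 + v2] turns the sum of the two
   supplies into the supply of the interconnection, so adding the two
   dissipation inequalities (with the smaller of the two margins eps) gives
   the first claim.  For trajectories with the same input, [Delta v = 0] and
   the supply reduces to the quadratic form of its upper-left block, which is
   nonpositive under the extra hypothesis. *)

Section BilinearForm.
Variable R : realType.

Definition bform a b (x : 'cV[R]_a) (M : 'M[R]_(a, b)) (y : 'cV[R]_b) : R :=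
  (x^T *m M *m y) 0 0.

Lemma qfE k (M : 'M[R]_k) z : qf M z = bform z M z. Proof. by []. Qed.

Lemma bform_block a1 a2 b1 b2 (x1 : 'cV[R]_a1) (x2 : 'cV[R]_a2)
    (y1 : 'cV[R]_b1) (y2 : 'cV[R]_b2) A B C D :
  bform (col_mx x1 x2) (block_mx A B C D) (col_mx y1 y2) =
  bform x1 A y1 + bform x1 B y2 + bform x2 C y1 + bform x2 D y2.
Proof. by rewrite /bform tr_col_mx mul_row_block mul_row_col !mulmxDl !mxE; ring. Qed.

Variables a b : nat.
Implicit Types (x : 'cV[R]_a) (M : 'M[R]_(a, b)) (y : 'cV[R]_b).

Lemma bformDl x x' M y : bform (x + x') M y = bform x M y + bform x' M y.
Proof. by rewrite /bform linearD /= !mulmxDl mxE. Qed.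

Lemma bformNl x M y : bform (- x) M y = - bform x M y.
Proof. by rewrite /bform linearN /= !mulNmx mxE. Qed.

Lemma bformDr x M y y' : bform x M (y + y') = bform x M y + bform x M y'.
Proof. by rewrite /bform mulmxDr mxE. Qed.

Lemma bformNr x M y : bform x M (- y) = - bform x M y.
Proof. by rewrite /bform mulmxN mxE. Qed.

Lemma bformDm x M M' y : bform x (M + M') y = bform x M y + bform x M' y.
Proof. by rewrite /bform mulmxDr mulmxDl mxE. Qed.

Lemma bformNm x M y : bform x (- M) y = - bform x M y.
Proof. by rewrite /bform mulmxN mulNmx mxE. Qed.

Lemma bformZm x c M y : bform x (c *: M) y = c * bform x M y.
Proof. by rewrite /bform -scalemxAr -scalemxAl mxE. Qed.

Lemma bform0m x y : bform x (0 : 'M[R]_(a, b)) y = 0.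
Proof. by rewrite /bform mulmx0 mul0mx mxE. Qed.

Lemma bform0l M y : bform 0 M y = 0.
Proof. by rewrite /bform trmx0 !mul0mx mxE. Qed.

Lemma bform0r x M : bform x M 0 = 0.
Proof. by rewrite /bform mulmx0 mxE. Qed.

End BilinearForm.

Lemma bform1_ge0 (R : realType) a (x : 'cV[R]_a) : 0 <= bform x 1%:M x.
Proof.
rewrite /bform mulmx1 mxE; apply: sumr_ge0 => i _.
by rewrite mxE -expr2 sqr_ge0.
Qed.

Section DissipationInequality.
Variables (R : realType) (gamma : R).

Lemma diss_lhsE n (P : 'M[R]_n) eps dxd dx :
  diss_lhs P gamma eps dxd dx =
  bform dxd P dx + bform dx P dxd + 2 * gamma * bform dx P dx
  + eps * bform dx 1%:M dx.
Proof. by rewrite /diss_lhs qfE bform_block bform0m bformDm !bformZm; ring. Qed.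

Lemma diss_lhs_block_diag n1 n2 (P1 : 'M[R]_n1) (P2 : 'M[R]_n2) eps
    dxd1 dxd2 dx1 dx2 :
  diss_lhs (block_mx P1 0 0 P2) gamma eps (col_mx dxd1 dxd2) (col_mx dx1 dx2) =
  diss_lhs P1 gamma eps dxd1 dx1 + diss_lhs P2 gamma eps dxd2 dx2.
Proof. by rewrite !diss_lhsE (scalar_mx_block n1 n2) !bform_block !bform0m; ring. Qed.

Lemma diss_lhs_le_eps n (P : 'M[R]_n) eps eps' dxd dx : eps <= eps' ->
  diss_lhs P gamma eps dxd dx <= diss_lhs P gamma eps' dxd dx.
Proof. by move=> le_eps; rewrite !diss_lhsE lerD2l ler_wpM2r ?bform1_ge0. Qed.

End DissipationInequality.

Lemma eps_ok_min (R : realType) strict (e1 e2 : R) :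
  eps_ok strict e1 -> eps_ok strict e2 -> eps_ok strict (Order.min e1 e2).
Proof. by rewrite /eps_ok; case: strict; rewrite ?lt_min ?le_min => -> ->. Qed.

Lemma has_inertia_block_diag (R : realType) n1 n2 (P1 : 'M[R]_n1)
    (P2 : 'M[R]_n2) p1 p2 :
  has_inertia P1 p1 -> has_inertia P2 p2 ->
  has_inertia (block_mx P1 0 0 P2) (p1 + p2).
Proof.
move=> [sP1 [l1 [char1 [neg1 pos1]]]] [sP2 [l2 [char2 [neg2 pos2]]]].
split; first by rewrite tr_block_mx sP1 sP2 !trmx0.
pose lam i := match fintype.split i with inl j => l1 j | inr j => l2 j end.
have lamL j : lam (lshift n2 j) = l1 j by rewrite /lam (unsplitK (inl _ j)).
have lamR j : lam (rshift n1 j) = l2 j by rewrite /lam (unsplitK (inr _ j)).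
have card_split (f : R -> bool) :
    #|[set i | f (lam i)]| = (#|[set j | f (l1 j)]| + #|[set j | f (l2 j)]|)%N.
  rewrite -!sum1_card big_split_ord /=.
  by congr (_ + _)%N; apply: eq_bigl => j; rewrite !inE ?lamL ?lamR.
(* needed because the counts of positive eigenvalues use truncated subtraction *)
have p1_le : (p1 <= n1)%N by rewrite -neg1 -[X in (_ <= X)%N]card_ord max_card.
have p2_le : (p2 <= n2)%N by rewrite -neg2 -[X in (_ <= X)%N]card_ord max_card.
exists lam; split; last first.
  rewrite (card_split (< 0)) (card_split (> 0)) /= neg1 neg2 pos1 pos2.
  by split=> //; lia.
rewrite /char_poly char_block_diag_mx det_ublock -/(char_poly P1) -/(char_poly P2).
by rewrite char1 char2 big_split_ord /=; congr (_ * _); apply: eq_bigr => i _;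
  rewrite ?lamL ?lamR.
Qed.

Definition supply_mx (R : realType) k m (Q : 'M[R]_k) (L : 'M[R]_(k, m))
    (Rm : 'M[R]_m) : 'M[R]_(k + m) :=
  block_mx Q L L^T Rm.

Section Feedback.
Variables (R : realType) (n1 n2 m1 k1 : nat).
Variables (S1 : sys R n1 m1 k1) (S2 : sys R n2 k1 m1) (gamma : R).
Variables (Q1 : 'M[R]_k1) (L1 : 'M[R]_(k1, m1)) (R1 : 'M[R]_m1).
Variables (Q2 : 'M[R]_m1) (L2 : 'M[R]_(m1, k1)) (R2 : 'M[R]_k1).
Hypothesis R1_sym : R1^T = R1.

Definition feedback_supply : 'M[R]_((k1 + m1) + (m1 + k1)) :=
  block_mx
    (block_mx (Q1 + R2) (- L1 + L2^T) (- L1^T + L2) (Q2 + R1))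
    (block_mx L1 R2 (- R1) L2)
    (block_mx L1^T (- R1^T) R2 L2^T)
    (block_mx R1 0 0 R2).

Lemma feedback_supplyE dy1 dy2 dv1 dv2 :
  qf feedback_supply (col_mx (col_mx dy1 dy2) (col_mx dv1 dv2)) =
  qf (supply_mx Q1 L1 R1) (col_mx dy1 (- dy2 + dv1)) +
  qf (supply_mx Q2 L2 R2) (col_mx dy2 (dy1 + dv2)).
Proof.
rewrite /feedback_supply R1_sym !qfE !bform_block !bform0m.
by rewrite !bformDm !bformNm !bformDl !bformDr !bformNl !bformNr; ring.
Qed.

Lemma feedback_increment_le (P1 : 'M[R]_n1) (P2 : 'M[R]_n2) e1 e2
    dxd1 dxd2 dx1 dx2 dy1 dy2 dv1 dv2 :
  diss_lhs P1 gamma e1 dxd1 dx1 <=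
    qf (supply_mx Q1 L1 R1) (col_mx dy1 (- dy2 + dv1)) ->
  diss_lhs P2 gamma e2 dxd2 dx2 <=
    qf (supply_mx Q2 L2 R2) (col_mx dy2 (dy1 + dv2)) ->
  diss_lhs (block_mx P1 0 0 P2) gamma (Order.min e1 e2)
    (col_mx dxd1 dxd2) (col_mx dx1 dx2)
  <= qf feedback_supply (col_mx (col_mx dy1 dy2) (col_mx dv1 dv2)).
Proof.
move=> diss1 diss2; rewrite diss_lhs_block_diag feedback_supplyE.
by apply: lerD; [apply: le_trans diss1 | apply: le_trans diss2];
  apply: diss_lhs_le_eps; rewrite ge_min lexx ?orbT.
Qed.

Lemma p_dissipative_feedback strict p1 p2 :
  p_dissipative strict S1 p1 gamma (supply_mx Q1 L1 R1) ->
  p_dissipative strict S2 p2 gamma (supply_mx Q2 L2 R2) ->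
  p_dissipative strict (feedback S1 S2) (p1 + p2) gamma feedback_supply.
Proof.
move=> [P1 [inP1 [e1 [ok_e1 diss1]]]] [P2 [inP2 [e2 [ok_e2 diss2]]]].
exists (block_mx P1 0 0 P2); split; first exact: has_inertia_block_diag.
exists (Order.min e1 e2); split; first exact: eps_ok_min.
move=> x xd v y x' xd' v' y'
  [x1 [xd1 [u1 [y1 [x2 [xd2 [u2 [y2 [S1t [S2t [xE [xdE [yE [u1E u2E]]]]]]]]]]]]]]
  [x1' [xd1' [u1' [y1' [x2' [xd2' [u2' [y2' [S1t' [S2t' [xE' [xdE' [yE' [u1E' u2E']]]]]]]]]]]]]].
apply: (filterS2 (ae_filter_ringOfSetsType _) _
  (diss1 _ _ _ _ _ _ _ _ S1t S1t') (diss2 _ _ _ _ _ _ _ _ S2t S2t')).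
move=> t le1 le2 t_ge0.
have du1 : u1 t - u1' t = - (y2 t - y2' t) + usubmx (v t - v' t).
  by rewrite u1E u1E' [usubmx (_ - _)]linearB /= opprD opprK opprB addrACA (addrC (- y2 t)).
have du2 : u2 t - u2' t = (y1 t - y1' t) + dsubmx (v t - v' t).
  by rewrite u2E u2E' [dsubmx (_ - _)]linearB /= opprD addrACA.
rewrite xE xE' xdE xdE' yE yE' -(vsubmxK (v t - v' t)) !opp_col_mx !add_col_mx.
move: le1 le2; rewrite du1 du2 => le1 le2.
exact: feedback_increment_le (le1 t_ge0) (le2 t_ge0).
Qed.

End Feedback.

Lemma p_dominant_of_dissipative (R : realType) strict n m k (S : sys R n m k)
    p gamma (Wyy : 'M[R]_k) Wyu Wuy (Wuu : 'M[R]_m) :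
  nsd Wyy -> p_dissipative strict S p gamma (block_mx Wyy Wyu Wuy Wuu) ->
  p_dominant strict S p gamma.
Proof.
move=> Wyy_nsd [P [inP [e [ok_e diss]]]]; exists P; split=> //; exists e; split=> //.
move=> x1 xd1 u y1 x2 xd2 u' y2 St1 St2 eq_u; subst u'.
apply: (@filterS _ _ (ae_filter_ringOfSetsType _) _ _ _
  (diss _ _ _ _ _ _ _ _ St1 St2)) => t le_t t_ge0.
apply: le_trans (le_t t_ge0) _.
by rewrite subrr qfE bform_block !bform0r bform0l !addr0; apply: Wyy_nsd.
Qed.

Theorem theorem2 (R : realType) (n1 n2 m1 k1 : nat)
    (S1 : sys R n1 m1 k1) (S2 : sys R n2 k1 m1) (p1 p2 : nat) (gamma : R)
    (Q1 : 'M[R]_k1) (L1 : 'M[R]_(k1, m1)) (R1 : 'M[R]_m1)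
    (Q2 : 'M[R]_m1) (L2 : 'M[R]_(m1, k1)) (R2 : 'M[R]_k1) (strict : bool) :
  0 <= gamma ->
  Q1^T = Q1 -> R1^T = R1 -> Q2^T = Q2 -> R2^T = R2 ->
  p_dissipative strict S1 p1 gamma (block_mx Q1 L1 L1^T R1) ->
  p_dissipative strict S2 p2 gamma (block_mx Q2 L2 L2^T R2) ->
  p_dissipative strict (feedback S1 S2) (p1 + p2) gamma
    (block_mx
       (block_mx (Q1 + R2) (- L1 + L2^T) (- L1^T + L2) (Q2 + R1))
       (block_mx L1 R2 (- R1) L2)
       (block_mx L1^T (- R1^T) R2 L2^T)
       (block_mx R1 0 0 R2))
  /\
  (nsd (block_mx (Q1 + R2) (- L1 + L2^T) (- L1^T + L2) (Q2 + R1)) ->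
   p_dominant strict (feedback S1 S2) (p1 + p2) gamma).
Proof.
move=> _ _ R1_sym _ _ diss1 diss2.
have diss := p_dissipative_feedback R1_sym diss1 diss2.
by split=> // Wyy_nsd; apply: p_dominant_of_dissipative Wyy_nsd diss.
Qed.
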